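(* Let $\mathbf{x}_1, \dots, \mathbf{x}_n \in [0,1]^p$ be given, with $n_0$ labeled and $n_1 = n - n_0$ unlabeled observations. For $\pi \in (0,1)$, $\alpha \in \mathbb{R}$ and a function $\eta$ on $[0,1]^p$, define the profile log-likelihood $\ell_n(\pi, \alpha, \eta)$ as \[ \sum_{i=1}^{n_0} \log\left[\frac{n_0 e^{\alpha + \eta(\mathbf{x}_i) - \tau}}{n_1\pi + (n_0 + n_1\pi) e^{\alpha + \eta(\mathbf{x}_i) - \tau}}\right] + \sum_{i=n_0+1}^n \log\left[\frac{n_1\pi + n_1\pi\, e^{\alpha + \eta(\mathbf{x}_i) - \tau}}{n_1\pi + (n_0 + n_1\pi) e^{\alpha + \eta(\mathbf{x}_i) - \tau}}\right], \] where $\tau = \log\{(1-\pi)/\pi\}$. Let $(\pi^{[r]}, \alpha^{[r]}, \eta^{[r]})$, $r = 0, 1, 2, \dots$, be the iterates of the EM-type algorithm described in the context, started from any initial values $(\pi^{[0]}, \alpha^{[0]}, \eta^{[0]})$. Then for every $r \geq 0$, \[ \ell_n(\pi^{[r]}, \alpha^{[r]}, \eta^{[r]}) \leq \ell_n(\pi^{[r+1]}, \alpha^{[r+1]}, \eta^{[r+1]}). \]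
   Context: This is the PU setting under the generalized additive exponential tilting model. Labeled $\mathbf{x}_1, \dots, \mathbf{x}_{n_0}$ are drawn from $g$. Unlabeled $\mathbf{x}_{n_0+1}, \dots, \mathbf{x}_n$ are drawn from $\pi g + (1-\pi) h$. The model is \[ g(\mathbf{x})/h(\mathbf{x}) = \omega(\mathbf{x}) = \exp\{\alpha + \eta(\mathbf{x})\}, \qquad \eta(\mathbf{x}) = \sum_{j=1}^p u_j(x_j). \] Set $y_i = 1$ for $i \le n_0$. The EM-type algorithm is as follows. At iteration $r$: (E-step) For $i = n_0+1, \dots, n$, set \[ y_i^{[r+1]} = \frac{\pi^{[r]} \exp\{\alpha^{[r]} + \eta^{[r]}(\mathbf{x}_i)\}}{\pi^{[r]} \exp\{\alpha^{[r]} + \eta^{[r]}(\mathbf{x}_i)\} + 1 - \pi^{[r]}}. \] Set $y_i^{[r+1]} = 1$ for $i \le n_0$. (M-step) Maximize, over $(\pi, \alpha, \eta)$ in the sieve space and over $\mathbf{p} = (p_1, \dots, p_n)$ with $p_i > 0$, $\sum_i p_i = 1$, $\sum_i p_i \exp\{\alpha + \eta(\mathbf{x}_i)\} = 1$, the function \[ Q^{[r+1]} = \sum_{i=1}^n \log p_i + \sum_{i=1}^{n_0} \{\alpha + \eta(\mathbf{x}_i)\} + \sum_{i=n_0+1}^n \big[y_i^{[r+1]} \log\{\pi e^{\alpha + \eta(\mathbf{x}_i)}\} + (1 - y_i^{[r+1]}) \log(1-\pi)\big]. \] This gives $\pi^{[r+1]} = n_1^{-1} \sum_{i > n_0} y_i^{[r+1]}$.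 The pair $(\alpha^{[r+1]}, \eta^{[r+1]})$ is obtained as follows. First maximize \[ \sum_{i=1}^n y_i^{[r+1]} \{\alpha_* + \eta(\mathbf{x}_i)\} - \sum_{i=1}^n \log[1 + \exp\{\alpha_* + \eta(\mathbf{x}_i)\}] \] over $(\alpha_*, \eta)$. Then set $\alpha^{[r+1]} = \alpha_*^{[r+1]} - c^{[r+1]}$, where \[ c^{[r+1]} = \log(n_0/n_1 + \pi^{[r+1]}) - \log(1 - \pi^{[r+1]}). \] The sieve space restricts $\eta = \sum_j \nu_j(x_j)$ with each $\nu_j$ a spline $\nu_j(x) = \sum_{k=1}^{K_n+m} \theta_{jk} N_k^{[m]}(x)$ in normalized B-splines of order $m$ on $[0,1]$ with $K_n$ interior knots. The coefficients satisfy $\max_k |\theta_{jk}| \le q_j$ and $\int_0^1 \nu_j = 0$. *)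

From HB Require Import structures.
From mathcomp Require Import all_boot all_order all_algebra.
From mathcomp Require Import all_classical all_reals all_analysis.
Set Implicit Arguments. Unset Strict Implicit. Unset Printing Implicit Defensive.
Import Order.TTheory GRing.Theory Num.Theory.
Local Open Scope ring_scope.

Section PU.
Variable R : realType.

Definition ext_knots (m K : nat) (u : nat -> R) (k : nat) : R :=
  if (k < m)%N then 0 else if (k < m + K)%N then u (k - m)%N else 1.

(** Normalized B-splines by the Cox--de Boor recursion (0/0 := 0, which is
    MathComp's convention x / 0 = 0).  Order-1 splines are indicators of
    [t_k, t_{k+1}), the last non-degenerate interval being closed at 1. *)
Fixpoint bspline (t : nat -> R) (r k : nat) (x : R) : R :=
  match r with
  | 0 => 0
  | 1 => if ((t k <= x) && (x < t k.+1))
            || [&& x == 1, t k < t k.+1 & t k.+1 == 1] then 1 else 0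
  | (r'.+1) as r1 =>
      (x - t k) / (t (k + r')%N - t k) * bspline t r' k x
      + (t (k + r1)%N - x) / (t (k + r1)%N - t k.+1) * bspline t r' k.+1 x
  end.

(** A spline nu(x) = sum_{k=1}^{K+m} theta_k N_k^{[m]}(x) (0-indexed here). *)
Definition spline (m K : nat) (u : nat -> R) (theta : nat -> R) (x : R) : R :=
  \sum_(k < K + m) theta k * bspline (ext_knots m K u) m k x.

Definition in_unit_cube (p : nat) (z : 'rV[R]_p) : Prop :=
  forall j : 'I_p, 0 <= z ord0 j <= 1.

Definition sieve (m K : nat) (u : nat -> R) (p : nat) (q : 'I_p -> R)
    (eta : 'rV[R]_p -> R) : Prop :=
  exists theta : 'I_p -> nat -> R,
    (forall (j : 'I_p) (k : nat), (k < K + m)%N -> `|theta j k| <= q j)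
    /\ (forall j : 'I_p,
          (\int[lebesgue_measure]_(x in `[0%R, 1%R]) (spline m K u (theta j) x)%:E
            = 0)%E)
    /\ (forall z : 'rV[R]_p, in_unit_cube z ->
          eta z = \sum_(j < p) spline m K u (theta j) (z ord0 j)).

(** Profile log-likelihood ell_n(pi, alpha, eta); observations i < n0
    (0-indexed) are the labeled ones. *)
Definition profile_loglik (n n0 p : nat) (x : 'I_n -> 'rV[R]_p)
    (pi alpha : R) (eta : 'rV[R]_p -> R) : R :=
  let n1 := (n - n0)%:R in
  let tau := ln ((1 - pi) / pi) in
  let w i := expR (alpha + eta (x i) - tau) in
  \sum_(i < n | (i < n0)%N)
      ln (n0%:R * w i / (n1 * pi + (n0%:R + n1 * pi) * w i))
  + \sum_(i < n | (n0 <= i)%N)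
      ln ((n1 * pi + n1 * pi * w i) / (n1 * pi + (n0%:R + n1 * pi) * w i)).

Definition estep (n n0 p : nat) (x : 'I_n -> 'rV[R]_p)
    (pi alpha : R) (eta : 'rV[R]_p -> R) (i : 'I_n) : R :=
  if (i < n0)%N then 1
  else pi * expR (alpha + eta (x i)) / (pi * expR (alpha + eta (x i)) + 1 - pi).

Definition logit_obj (n p : nat) (x : 'I_n -> 'rV[R]_p) (y : 'I_n -> R)
    (astar : R) (eta : 'rV[R]_p -> R) : R :=
  \sum_(i < n) (y i * (astar + eta (x i)) - ln (1 + expR (astar + eta (x i)))).

Definition em_step (m K : nat) (u : nat -> R) (n n0 p : nat) (q : 'I_p -> R)
    (x : 'I_n -> 'rV[R]_p) (pi alpha : R) (eta : 'rV[R]_p -> R)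
    (pi' alpha' : R) (eta' : 'rV[R]_p -> R) : Prop :=
  let y := estep n0 x pi alpha eta in
  let n1 := (n - n0)%:R in
  pi' = n1^-1 * \sum_(i < n | (n0 <= i)%N) y i
  /\ exists astar : R,
       sieve m K u q eta'
       /\ (forall (a : R) (e : 'rV[R]_p -> R), sieve m K u q e ->
             logit_obj x y a e <= logit_obj x y astar eta')
       /\ alpha' = astar - (ln (n0%:R / n1 + pi') - ln (1 - pi')).

End PU.

From HB Require Import structures.
From mathcomp Require Import all_boot all_order all_algebra.
From mathcomp Require Import all_classical all_reals all_analysis.
From mathcomp Require Import ring lra.
Import Order.TTheory GRing.Theory Num.Theory.
Local Open Scope ring_scope.

(* Put rho = n1 pi / (n0 + n1 pi) and a_i = alpha_* + eta(x_i), where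
   alpha_* = alpha + log(n0/n1 + pi) - log(1 - pi) is the intercept fitted in
   the M-step.  Then ell_n is the log-likelihood of a latent-class logistic
   model: observation i is positive with probability sigma(a_i), and a positive
   observation is unlabeled with probability rho.  The algorithm is exactly EM
   for this model: the E-step weights are the posterior probabilities of being
   positive, and the expected complete-data log-likelihood splits into a
   Bernoulli term in rho, maximised at rho' = S / (n0 + S) (that is
   pi' = S / n1, with S the sum of the unlabeled weights), plus the logistic
   objective maximised in the M-step.  As always for EM, the gain in observed
   log-likelihood dominates the gain in expected complete-data log-likelihood;
   here this is the tangent inequality for the convex map t |-> log(1 + e^t). *)

Set Implicit Arguments. Unset Strict Implicit.

Section LogInequalities.
Variable R : realType.

Lemma lnB_le_div_sub1 (P Q : R) : 0 < P -> 0 < Q -> ln P - ln Q <= P / Q - 1.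
Proof.
move=> P_gt0 Q_gt0; rewrite -ln_div ?posrE //.
have := @le_ln1Dx R (P / Q - 1); rewrite [1 + _]addrC subrK; apply.
by rewrite ltrBrDr addNr divr_gt0.
Qed.

Lemma bernoulli_loglik_le_mle (N0 S r : R) : 0 < N0 -> 0 < S -> 0 < r < 1 ->
  N0 * ln (1 - r) + S * ln r
    <= N0 * ln (1 - S / (N0 + S)) + S * ln (S / (N0 + S)).
Proof.
move=> N0_gt0 S_gt0 /andP[r_gt0 r_lt1].
have NS_gt0 : 0 < N0 + S by rewrite addr_gt0.
have -> : 1 - S / (N0 + S) = N0 / (N0 + S) by field; rewrite gt_eqF.
have le0 := lnB_le_div_sub1 (ltac:(by rewrite subr_gt0) : 0 < 1 - r)
                               (divr_gt0 N0_gt0 NS_gt0).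
have le1 := lnB_le_div_sub1 r_gt0 (divr_gt0 S_gt0 NS_gt0).
(* With weights N0 and S, the right-hand sides of the two bounds cancel. *)
have sum0 : N0 * ((1 - r) / (N0 / (N0 + S)) - 1) + S * (r / (S / (N0 + S)) - 1) = 0.
  by field; rewrite !gt_eqF.
have := ler_wpM2l (ltW N0_gt0) le0; have := ler_wpM2l (ltW S_gt0) le1.
rewrite !mulrBr in sum0 *; lra.
Qed.

Lemma ln1D_tangent_le (B B' : R) : 0 < B -> 0 < B' ->
  ln (1 + B) + B / (1 + B) * (ln B' - ln B) <= ln (1 + B').
Proof.
move=> B_gt0 B'_gt0.
have B1_gt0 : 0 < 1 + B by rewrite addr_gt0.
have B'1_gt0 : 0 < 1 + B' by rewrite addr_gt0.
have le0 := lnB_le_div_sub1 B1_gt0 B'1_gt0.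
have := lnB_le_div_sub1 (mulr_gt0 B1_gt0 B'_gt0) (mulr_gt0 B_gt0 B'1_gt0).
rewrite !lnM ?posrE // => le1.
have w_ge0 : 0 <= B / (1 + B) by rewrite divr_ge0 // ltW.
have w_le1 : 0 <= 1 - B / (1 + B).
  by rewrite subr_ge0 ler_pdivrMr // mul1r lerDr.
have sum0 : (1 - B / (1 + B)) * ((1 + B) / (1 + B') - 1)
   + B / (1 + B) * ((1 + B) * B' / (B * (1 + B')) - 1) = 0.
  by field; rewrite !gt_eqF.
have := ler_wpM2l w_le1 le0; have := ler_wpM2l w_ge0 le1.
move: sum0; set w := B / (1 + B); rewrite !mulrBr; lra.
Qed.

End LogInequalities.

Section LatentClassLogit.
Variable R : realType.

Definition obs_loglik (lab : bool) (rho a : R) : R :=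
  if lab then ln (1 - rho) + a - ln (1 + expR a)
  else ln (1 + rho * expR a) - ln (1 + expR a).

Definition posterior (lab : bool) (rho a : R) : R :=
  if lab then 1 else rho * expR a / (1 + rho * expR a).

Definition complete_loglik (lab : bool) (y rho a : R) : R :=
  (if lab then ln (1 - rho) else y * ln rho) + (y * a - ln (1 + expR a)).

Lemma obs_loglik_labeledE (rho a : R) : rho < 1 ->
  obs_loglik true rho a = ln ((1 - rho) * expR a / (1 + expR a)).
Proof.
move=> rho_lt1; have rho1_gt0 : 0 < 1 - rho by rewrite subr_gt0.
have ea1_gt0 : 0 < 1 + expR a by rewrite addr_gt0 ?expR_gt0.
by rewrite ln_div ?lnM ?posrE ?mulr_gt0 ?expR_gt0 // expRK.
Qed.

Lemma obs_loglik_unlabeledE (rho a : R) : 0 <= rho ->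
  obs_loglik false rho a = ln ((1 + rho * expR a) / (1 + expR a)).
Proof.
move=> rho_ge0; have B_ge0 : 0 <= rho * expR a by rewrite mulr_ge0 ?expR_ge0.
have B1_gt0 : 0 < 1 + rho * expR a by lra.
by rewrite ln_div // posrE // addr_gt0 ?expR_gt0.
Qed.

Lemma posterior_unlabeled_in01 (rho a : R) :
  0 < rho -> 0 < posterior false rho a < 1.
Proof.
move=> rho_gt0; have B_gt0 : 0 < rho * expR a by rewrite mulr_gt0 ?expR_gt0.
have B1_gt0 : 0 < 1 + rho * expR a by rewrite addr_gt0.
by rewrite divr_gt0 //= ltr_pdivrMr // mul1r ltrDr.
Qed.

Lemma complete_loglik_gap_le (lab : bool) (rho rho' a a' : R) :
  0 < rho -> 0 < rho' ->
  complete_loglik lab (posterior lab rho a) rho' a'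
    - complete_loglik lab (posterior lab rho a) rho a
    <= obs_loglik lab rho' a' - obs_loglik lab rho a.
Proof.
move=> rho_gt0 rho'_gt0; rewrite /complete_loglik /obs_loglik /posterior.
case: lab; first by rewrite !mul1r; lra.
have := ln1D_tangent_le (mulr_gt0 rho_gt0 (expR_gt0 a))
                        (mulr_gt0 rho'_gt0 (expR_gt0 a')).
rewrite !lnM ?posrE ?expR_gt0 // !expRK; lra.
Qed.

Lemma sum_complete_loglikE n n0 (y : 'I_n -> R) (rho : R) (a : 'I_n -> R) :
  (n0 <= n)%N ->
  \sum_(i < n) complete_loglik (i < n0)%N (y i) rho (a i)
    = n0%:R * ln (1 - rho) + (\sum_(i < n | (n0 <= i)%N) y i) * ln rho
      + \sum_(i < n) (y i * a i - ln (1 + expR (a i))).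
Proof.
move=> n0_le_n; rewrite big_split /= (bigID (fun i : 'I_n => (i < n0)%N)) /=.
congr (_ + _ + _).
- rewrite (eq_bigr (fun=> ln (1 - rho))) => [|i ->//].
  rewrite (@big_ord_narrow _ _ _ _ _ (fun=> ln (1 - rho)) n0_le_n).
  by rewrite sumr_const card_ord mulr_natl.
- rewrite big_distrl /=; apply: eq_big => [i|i]; first by rewrite -leqNgt.
  by move=> /negbTE ->.
Qed.

Lemma sum_obs_loglik_le n n0 (rho : R) (a a' : 'I_n -> R) :
  (0 < n0)%N -> (n0 <= n)%N -> 0 < rho < 1 ->
  let y (i : 'I_n) := posterior (i < n0)%N rho (a i) in
  let S := \sum_(i < n | (n0 <= i)%N) y i in
  0 < S ->
  \sum_(i < n) (y i * a i - ln (1 + expR (a i)))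
    <= \sum_(i < n) (y i * a' i - ln (1 + expR (a' i))) ->
  \sum_(i < n) obs_loglik (i < n0)%N rho (a i)
    <= \sum_(i < n) obs_loglik (i < n0)%N (S / (n0%:R + S)) (a' i).
Proof.
move=> n0_gt0 n0_le_n rho01 y S S_gt0 logit_le.
have N0_gt0 : 0 < n0%:R :> R by rewrite ltr0n.
have rho'_gt0 : 0 < S / (n0%:R + S) by rewrite divr_gt0 // addr_gt0.
have [rho_gt0 _] := andP rho01.
rewrite -subr_ge0 -sumrB.
apply: le_trans (ler_sum _ (fun (i : 'I_n) _ =>
  complete_loglik_gap_le (i < n0)%N (a i) (a' i) rho_gt0 rho'_gt0)).
rewrite sumrB !sum_complete_loglikE //.
have := bernoulli_loglik_le_mle N0_gt0 S_gt0 rho01.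
rewrite -/S; lra.
Qed.

End LatentClassLogit.

Ltac positivity := repeat first
  [ assumption | rewrite subr_gt0 | apply: addr_gt0 | apply: mulr_gt0
  | apply: divr_gt0 | exact: expR_gt0 ].

Section Reparametrization.
Variables (R : realType) (N0 N1 pi : R).
Hypotheses (N0_gt0 : 0 < N0) (N1_gt0 : 0 < N1) (pi01 : 0 < pi < 1).

Definition unlabeled_share : R := N1 * pi / (N0 + N1 * pi).

Definition logit_intercept (alpha : R) : R :=
  alpha + (ln (N0 / N1 + pi) - ln (1 - pi)).

Lemma unlabeled_share_in01 : 0 < unlabeled_share < 1.
Proof.
have [pi_gt0 _] := andP pi01; have N1pi_gt0 : 0 < N1 * pi by rewrite mulr_gt0.
by rewrite divr_gt0 ?addr_gt0 //= ltr_pdivrMr ?addr_gt0 // mul1r ltrDr.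
Qed.

Lemma expR_logit_intercept (alpha v : R) :
  expR (logit_intercept alpha + v) = expR (alpha + v) * (N0 / N1 + pi) / (1 - pi).
Proof.
have [pi_gt0 pi_lt1] := andP pi01.
rewrite /logit_intercept addrAC [LHS]expRD expRB !lnK ?posrE ?subr_gt0 //.
  by rewrite mulrA.
by rewrite addr_gt0 ?divr_gt0.
Qed.

Let expR_tau (alpha v : R) :
  expR (alpha + v - ln ((1 - pi) / pi)) = expR (alpha + v) * pi / (1 - pi).
Proof.
have [pi_gt0 pi_lt1] := andP pi01.
rewrite expRB lnK ?posrE ?divr_gt0 ?subr_gt0 //.
by field; rewrite !gt_eqF //; positivity.
Qed.

Lemma labeled_loglikE (alpha v : R) :
  let w := expR (alpha + v - ln ((1 - pi) / pi)) in
  ln (N0 * w / (N1 * pi + (N0 + N1 * pi) * w))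
    = obs_loglik true unlabeled_share (logit_intercept alpha + v).
Proof.
have [pi_gt0 pi_lt1] := andP pi01; have [_ share_lt1] := andP unlabeled_share_in01.
move=> w; rewrite /w obs_loglik_labeledE // expR_logit_intercept expR_tau.
by congr ln; rewrite /unlabeled_share; field; rewrite !gt_eqF //; positivity.
Qed.

Lemma unlabeled_loglikE (alpha v : R) :
  let w := expR (alpha + v - ln ((1 - pi) / pi)) in
  ln ((N1 * pi + N1 * pi * w) / (N1 * pi + (N0 + N1 * pi) * w))
    = obs_loglik false unlabeled_share (logit_intercept alpha + v).
Proof.
have [pi_gt0 pi_lt1] := andP pi01; have [share_gt0 _] := andP unlabeled_share_in01.
move=> w; rewrite /w obs_loglik_unlabeledE ?ltW // expR_logit_intercept expR_tau.
by congr ln; rewrite /unlabeled_share; field; rewrite !gt_eqF //; positivity.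
Qed.

Lemma posterior_unlabeledE (alpha v : R) :
  pi * expR (alpha + v) / (pi * expR (alpha + v) + 1 - pi)
    = posterior false unlabeled_share (logit_intercept alpha + v).
Proof.
have [pi_gt0 pi_lt1] := andP pi01.
rewrite -addrA /posterior expR_logit_intercept /unlabeled_share.
by field; rewrite !gt_eqF //; positivity.
Qed.

End Reparametrization.

Section PUModel.
Variables (R : realType) (n n0 p : nat) (x : 'I_n -> 'rV[R]_p).
Hypotheses (n0_gt0 : (0 < n0)%N) (n0_lt_n : (n0 < n)%N).

Local Notation N0 := (n0%:R : R).
Local Notation N1 := ((n - n0)%:R : R).
Local Notation share := (unlabeled_share N0 N1).
Local Notation intercept := (logit_intercept N0 N1).

Let N0_gt0 : 0 < N0. Proof. by rewrite ltr0n. Qed.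
Let N1_gt0 : 0 < N1. Proof. by rewrite ltr0n subn_gt0. Qed.

Lemma profile_loglikE (pi alpha : R) (eta : 'rV[R]_p -> R) : 0 < pi < 1 ->
  profile_loglik n0 x pi alpha eta
    = \sum_(i < n) obs_loglik (i < n0)%N (share pi) (intercept pi alpha + eta (x i)).
Proof.
move=> pi01; rewrite /profile_loglik [RHS](bigID (fun i : 'I_n => (i < n0)%N)) /=.
congr (_ + _).
  by apply: eq_bigr => i ->; exact: labeled_loglikE.
apply: eq_big => [i | i n0_le_i]; first by rewrite leqNgt.
by rewrite ltnNge n0_le_i; exact: unlabeled_loglikE.
Qed.

Lemma estepE (pi alpha : R) (eta : 'rV[R]_p -> R) : 0 < pi < 1 ->
  estep n0 x pi alpha eta
    = (fun i => posterior (i < n0)%N (share pi) (intercept pi alpha + eta (x i))).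
Proof.
move=> pi01; apply: funext => i /=; rewrite /estep.
by case: (boolP (i < n0)%N) => // _; exact: posterior_unlabeledE.
Qed.

Lemma sumr_tail_in_range (f : 'I_n -> R) :
  (forall i : 'I_n, (n0 <= i)%N -> 0 < f i < 1) ->
  0 < \sum_(i < n | (n0 <= i)%N) f i < N1.
Proof.
move=> f01.
have tail_gt0 (g : 'I_n -> R) : (forall i : 'I_n, (n0 <= i)%N -> 0 < g i) ->
    0 < \sum_(i < n | (n0 <= i)%N) g i.
  move=> g_gt0; rewrite (bigD1 (Ordinal n0_lt_n)) //=.
  by apply: ltr_wpDr; [apply: sumr_ge0 => i /andP[/g_gt0 /ltW] | exact: g_gt0].
rewrite tail_gt0 => [/=|i /f01 /andP[] //].
rewrite -subr_gt0 -[N1]sumr_const_nat big_geq_mkord -sumrB.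
by apply: tail_gt0 => i /f01 /andP[_]; rewrite subr_gt0.
Qed.

Variables (m K : nat) (u : nat -> R) (q : 'I_p -> R).

Lemma estep_tail_in_range (pi alpha : R) (eta : 'rV[R]_p -> R) : 0 < pi < 1 ->
  0 < \sum_(i < n | (n0 <= i)%N) estep n0 x pi alpha eta i < N1.
Proof.
move=> pi01; apply: sumr_tail_in_range => i n0_le_i.
have [share_gt0 _] := andP (unlabeled_share_in01 N0_gt0 N1_gt0 pi01).
by rewrite estepE //= ltnNge n0_le_i; exact: posterior_unlabeled_in01.
Qed.

Lemma em_step_pi_in01 (pi alpha pi' alpha' : R) (eta eta' : 'rV[R]_p -> R) :
  0 < pi < 1 -> em_step m K u n0 q x pi alpha eta pi' alpha' eta' -> 0 < pi' < 1.
Proof.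
move=> pi01 [-> _]; have /andP[S_gt0 S_lt_N1] := estep_tail_in_range alpha eta pi01.
by rewrite mulrC divr_gt0 //= ltr_pdivrMr // mul1r.
Qed.

Lemma em_step_loglik_le (pi alpha pi' alpha' : R) (eta eta' : 'rV[R]_p -> R) :
  0 < pi < 1 -> sieve m K u q eta ->
  em_step m K u n0 q x pi alpha eta pi' alpha' eta' ->
  profile_loglik n0 x pi alpha eta <= profile_loglik n0 x pi' alpha' eta'.
Proof.
move=> pi01 sieve_eta step; have pi'01 := em_step_pi_in01 pi01 step.
have /andP[S_gt0 _] := estep_tail_in_range alpha eta pi01.
case: step => pi'E [astar [_ [astar_max alpha'E]]].
rewrite estepE // in S_gt0 pi'E astar_max.
have intercept'E : intercept pi' alpha' = astar.
  by rewrite /logit_intercept alpha'E subrK.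
rewrite !profile_loglikE // intercept'E [share pi']/unlabeled_share pi'E.
rewrite mulrA divff ?gt_eqF // mul1r.
apply: sum_obs_loglik_le => //; first exact: ltnW.
  exact: unlabeled_share_in01.
exact: astar_max.
Qed.

End PUModel.

Unset Implicit Arguments.

Theorem proposition2 (R : realType) (n n0 p : nat) (x : 'I_n -> 'rV[R]_p)
    (m K : nat) (u : nat -> R) (q : 'I_p -> R)
    (pi alpha : nat -> R) (eta : nat -> 'rV[R]_p -> R) :
  (0 < n0)%N -> (n0 < n)%N ->
  (forall i : 'I_n, in_unit_cube (x i)) ->
  (0 < m)%N ->
  (forall k : nat, (k < K)%N -> 0 < u k < 1) ->
  (forall k : nat, (k.+1 < K)%N -> u k < u k.+1) ->
  0 < pi 0%N < 1 ->
  sieve m K u q (eta 0%N) ->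
  (forall r : nat, em_step m K u n0 q x (pi r) (alpha r) (eta r)
                     (pi r.+1) (alpha r.+1) (eta r.+1)) ->
  forall r : nat,
    profile_loglik n0 x (pi r) (alpha r) (eta r)
    <= profile_loglik n0 x (pi r.+1) (alpha r.+1) (eta r.+1).
Proof.
move=> n0_gt0 n0_lt_n _ _ _ _ pi0_01 sieve0 em.
have pi01 r : 0 < pi r < 1.
  by elim: r => [// | r IHr]; exact: em_step_pi_in01 IHr (em r).
move=> r; apply: em_step_loglik_le (em r) => //.
by case: r => [// | r]; have [_ [astar []]] := em r.
Qed.
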